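(* For all integers $m\geq0$ and all $x$ with $0<|x|<1/4$, \[ \sum_{n=0}^\infty\binom{2n}{n}\frac{O_n}{n+m+1}x^n=\frac{\sqrt{1-4x}}{2x}\bigl(\ln\sqrt{1-4x}-1\bigr)+\frac{0^m}{2x^{m+1}}+\frac{m}{4^mx^{m+1}}\sum_{j=0}^{m-1}(-1)^j\binom{m-1}{j}A_j(x), \] where \[ A_j(x)=\frac{(1-4x)^{j+3/2}}{2j+3}\Bigl(\ln\sqrt{1-4x}-\frac{2j+4}{2j+3}\Bigr)+\frac{2j+4}{(2j+3)^2}. \]
   Context: $O_n=\sum_{j=1}^n\frac1{2j-1}$ is the $n$th odd harmonic number ($O_0=0$). Convention: $0^0=1$ and $0^m=0$ for $m\ge1$; the sum over $j$ is empty (equal to $0$) when $m=0$. *)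

From Stdlib Require Import Reals.
From Coquelicot Require Import Coquelicot.
Open Scope R_scope.

Fixpoint oddH (n : nat) : R :=
  match n with
  | O => 0
  | S k => oddH k + / (2 * INR (S k) - 1)
  end.

Definition binom (n k : nat) : R := Binomial.C n k.

Fixpoint sum_lt (f : nat -> R) (m : nat) : R :=
  match m with
  | O => 0
  | S k => sum_lt f k + f k
  end.

Definition A_j (j : nat) (x : R) : R :=
  Rpower (1 - 4 * x) (INR j + 3 / 2) / (2 * INR j + 3)
    * (ln (sqrt (1 - 4 * x)) - (2 * INR j + 4) / (2 * INR j + 3))
  + (2 * INR j + 4) / (2 * INR j + 3) ^ 2.

From Stdlib Require Import Reals Lra Lia.
From Coquelicot Require Import Coquelicot.
Open Scope R_scope.

(* With E(y) = sum C(2n,n) y^n and F(y) = sum C(2n,n) O_n y^n, the recurrences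
   (n+1) C(2n+2,n+1) = (4n+2) C(2n,n) and O_(n+1) = O_n + 1/(2n+1) give
   (1-4y) E' = 2E and (1-4y) F' = 2F + 2E, whence E = 1/sqrt(1-4y) and
   F = -ln(sqrt(1-4y)) / sqrt(1-4y).  Multiplied by x^(m+1), the series of the
   theorem is the primitive of y^m F(y) vanishing at 0.  So is the closed form:
   A_j' = -2 (1-4y)^(j+1/2) (ln(sqrt(1-4y)) - 1), and the binomial theorem sums
   sum_j (-1)^j C(m-1,j) (1-4y)^j to (4y)^(m-1). *)

Lemma quarter_disk_pos y : Rabs y < / 4 -> 0 < 1 - 4 * y.
Proof. intros Hy. apply Rabs_def2 in Hy. lra. Qed.

Definition central_binom (n : nat) : R := binom (2 * n) n.

Lemma central_binom_0 : central_binom 0 = 1.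
Proof. unfold central_binom, binom, Binomial.C. simpl. field. Qed.

Lemma central_binom_succ n :
  INR (S n) * central_binom (S n) = (4 * INR n + 2) * central_binom n.
Proof.
  unfold central_binom, binom, Binomial.C.
  replace (2 * S n)%nat with (S (S (2 * n))) by lia.
  replace (S (S (2 * n)) - S n)%nat with (S n) by lia.
  replace (2 * n - n)%nat with n by lia.
  rewrite !fact_simpl, !mult_INR, !S_INR, mult_INR. simpl (INR 2).
  assert (Hf : INR (Factorial.fact n) <> 0) by apply INR_fact_neq_0.
  assert (Hn : INR n + 1 <> 0) by (generalize (pos_INR n); lra).
  field. auto.
Qed.

Lemma central_binom_pos n : 0 < central_binom n.
Proof.
  unfold central_binom, binom, Binomial.C.
  apply Rdiv_lt_0_compat; [|apply Rmult_lt_0_compat]; apply INR_fact_lt_0.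
Qed.

Lemma central_binom_le_pow4 n : central_binom n <= 4 ^ n.
Proof.
  induction n as [|n IH].
  - rewrite central_binom_0. simpl. lra.
  - assert (Hrec := central_binom_succ n). assert (Hc := central_binom_pos n).
    rewrite S_INR in Hrec. assert (Hn := pos_INR n). simpl. nra.
Qed.

Lemma oddH_succ n : oddH (S n) = oddH n + / (2 * INR n + 1).
Proof.
  change (oddH (S n)) with (oddH n + / (2 * INR (S n) - 1)).
  rewrite S_INR. f_equal. f_equal. ring.
Qed.

Lemma oddH_bounds n : 0 <= oddH n <= INR n.
Proof.
  induction n as [|n IH].
  - simpl. lra.
  - rewrite oddH_succ, S_INR. assert (Hn := pos_INR n).
    assert (0 < / (2 * INR n + 1) <= 1).
    { split.
      - apply Rinv_0_lt_compat. lra.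
      - rewrite <- Rinv_1. apply Rinv_le_contravar; lra. }
    lra.
Qed.

Lemma CV_radius_le_abs (a b : nat -> R) :
  (forall n, Rabs (a n) <= Rabs (b n)) -> Rbar_le (CV_radius b) (CV_radius a).
Proof.
  intros Hab.
  refine (is_lub_Rbar_subset _ _ _ _ _ (CV_radius_bounded a) (CV_radius_bounded b)).
  intros r [M HM]. exists M. intros n.
  eapply Rle_trans; [|apply (HM n)].
  rewrite !Rabs_mult. apply Rmult_le_compat_r; [apply Rabs_pos | apply Hab].
Qed.

Lemma CV_radius_pow4 : CV_radius (fun n => 4 ^ n) = / 4.
Proof.
  apply CV_radius_finite_DAlembert.
  - intros n. apply pow_nonzero. lra.
  - lra.
  - apply is_lim_seq_ext with (fun _ => 4); [|apply is_lim_seq_const].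
    intros n. assert (H4 : 4 ^ n <> 0) by (apply pow_nonzero; lra).
    simpl. replace (4 * 4 ^ n / 4 ^ n) with 4 by (field; auto).
    rewrite Rabs_pos_eq; lra.
Qed.

(* Compare with the derivative of the geometric series [sum (4y)^n]. *)
Lemma lt_CV_radius_of_bound (a : nat -> R) y :
  (forall n, Rabs (a n) <= INR (S n) * 4 ^ n) ->
  Rabs y < / 4 -> Rbar_lt (Rabs y) (CV_radius a).
Proof.
  intros Ha Hy.
  apply Rbar_lt_le_trans with (/ 4); [exact Hy|].
  rewrite <- CV_radius_pow4, <- CV_radius_derive.
  apply CV_radius_le_abs. intros n. unfold PS_derive. change (4 ^ S n) with (4 * 4 ^ n).
  assert (Hn := pos_INR (S n)). assert (H4 : 0 < 4 ^ n) by (apply pow_lt; lra).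
  rewrite (Rabs_pos_eq (_ * _)) by nra.
  eapply Rle_trans; [apply Ha|]. nra.
Qed.

Lemma PSeries_ode (a q : nat -> R) y :
  Rbar_lt (Rabs y) (CV_radius a) -> Rbar_lt (Rabs y) (CV_radius q) ->
  (forall n, INR (S n) * a (S n) = (4 * INR n + 2) * a n + q n) ->
  (1 - 4 * y) * PSeries (PS_derive a) y = 2 * PSeries a y + PSeries q y.
Proof.
  intros Ha Hq Hrec.
  set (N := PS_incr_1 (PS_derive a)).
  assert (HN : forall n, N n = INR n * a n).
  { intros [|n]; unfold N, PS_incr_1, PS_derive; simpl; [|reflexivity].
    change (zero : R) with 0. ring. }
  assert (EN : ex_pseries N y).
  { apply CV_radius_inside. unfold N. rewrite CV_radius_incr_1, CV_radius_derive. exact Ha. }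
  assert (Ea : ex_pseries a y) by (apply CV_radius_inside; exact Ha).
  assert (Eq : ex_pseries q y) by (apply CV_radius_inside; exact Hq).
  assert (Hshift : y * PSeries (PS_derive a) y = PSeries N y)
    by (unfold N; rewrite PSeries_incr_1; reflexivity).
  assert (Hderiv :
    PSeries (PS_derive a) y = 4 * PSeries N y + 2 * PSeries a y + PSeries q y).
  { rewrite (PSeries_ext _ (PS_plus (PS_plus (PS_scal 4 N) (PS_scal 2 a)) q)).
    - rewrite !PSeries_plus, !PSeries_scal;
        auto using ex_pseries_plus, ex_pseries_scal, Rmult_comm.
    - intros n. unfold PS_plus, PS_scal, PS_derive. rewrite HN, Hrec.
      change plus with Rplus. change scal with Rmult. ring. }
  replace ((1 - 4 * y) * PSeries (PS_derive a) y)
    with (PSeries (PS_derive a) y - 4 * (y * PSeries (PS_derive a) y)) by ring.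
  rewrite Hshift, Hderiv. ring.
Qed.

Lemma is_derive_0_const (f : R -> R) r :
  (forall y, Rabs y < r -> is_derive f y 0) -> forall y, Rabs y < r -> f y = f 0.
Proof.
  intros Hd y Hy.
  assert (Hbetween : forall z, Rmin 0 y <= z <= Rmax 0 y -> Rabs z < r).
  { intros z. unfold Rmin, Rmax.
    destruct (Rle_dec 0 y); intros [H1 H2]; unfold Rabs in *;
      destruct (Rcase_abs z); destruct (Rcase_abs y); lra. }
  destruct (MVT_gen f 0 y (fun _ => 0)) as [c [_ Hc]].
  - intros z Hz. apply Hd, Hbetween. lra.
  - intros z Hz.
    apply continuity_pt_filterlim, (@ex_derive_continuous R_AbsRing R_NormedModule).
    exists 0. apply Hd, Hbetween. exact Hz.
  - lra.
Qed.

(* [W * sqrt (1 - 4y)] has derivative [((1 - 4y) W' - 2 W) / sqrt (1 - 4y)]. *)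
Lemma ode_mul_sqrt_const (W W' : R -> R) :
  (forall y, Rabs y < / 4 -> is_derive W y (W' y)) ->
  (forall y, Rabs y < / 4 -> (1 - 4 * y) * W' y = 2 * W y) ->
  forall y, Rabs y < / 4 -> W y * sqrt (1 - 4 * y) = W 0.
Proof.
  intros Hd Hode y Hy.
  replace (W 0) with (W 0 * sqrt (1 - 4 * 0))
    by (replace (1 - 4 * 0) with 1 by ring; rewrite sqrt_1; ring).
  apply (is_derive_0_const (fun y => W y * sqrt (1 - 4 * y)) (/ 4)); auto.
  intros z Hz. assert (Hu := quarter_disk_pos z Hz).
  assert (Hs : 0 < sqrt (1 - 4 * z)) by (apply sqrt_lt_R0; auto).
  assert (HW := Hode z Hz).
  replace 0 with (W' z * sqrt (1 - 4 * z) + W z * (-4 / (2 * sqrt (1 - 4 * z)))).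
  - apply (is_derive_mult W (fun y => sqrt (1 - 4 * y))); auto.
    + apply (is_derive_sqrt (fun y => 1 - 4 * y)); auto. auto_derive; auto. ring.
    + intros; apply Rmult_comm.
  - apply Rmult_eq_reg_r with (sqrt (1 - 4 * z)); [|lra].
    field_simplify; [|lra]. rewrite pow2_sqrt by lra. lra.
Qed.

Lemma is_derive_ln_sqrt_1_4y y :
  0 < 1 - 4 * y -> is_derive (fun z => ln (sqrt (1 - 4 * z))) y (-2 / (1 - 4 * y)).
Proof.
  intros Hu. assert (Hs : 0 < sqrt (1 - 4 * y)) by (apply sqrt_lt_R0; auto).
  auto_derive; [repeat split; auto|].
  replace (1 + - (4 * y)) with (1 - 4 * y) by ring.
  rewrite <- (sqrt_sqrt (1 - 4 * y)) at 3 by lra. field. lra.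
Qed.

Lemma lt_CV_radius_central_binom y :
  Rabs y < / 4 -> Rbar_lt (Rabs y) (CV_radius central_binom).
Proof.
  apply lt_CV_radius_of_bound. intros n.
  rewrite Rabs_pos_eq by apply Rlt_le, central_binom_pos.
  assert (Hle := central_binom_le_pow4 n). assert (H4 : 0 < 4 ^ n) by (apply pow_lt; lra).
  rewrite S_INR. assert (Hn := pos_INR n). nra.
Qed.

Definition central_binom_oddH (n : nat) : R := central_binom n * oddH n.

Lemma central_binom_oddH_bound n : Rabs (central_binom_oddH n) <= INR (S n) * 4 ^ n.
Proof.
  unfold central_binom_oddH.
  assert (Hc := central_binom_pos n). assert (Hle := central_binom_le_pow4 n).
  assert (Ho := oddH_bounds n).
  rewrite Rabs_pos_eq by nra. rewrite S_INR.
  assert (central_binom n * oddH n <= 4 ^ n * INR n) by (apply Rmult_le_compat; lra).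
  assert (H4 : 0 < 4 ^ n) by (apply pow_lt; lra). nra.
Qed.

Lemma lt_CV_radius_central_binom_oddH y :
  Rabs y < / 4 -> Rbar_lt (Rabs y) (CV_radius central_binom_oddH).
Proof. apply lt_CV_radius_of_bound, central_binom_oddH_bound. Qed.

Lemma central_binom_ode y : Rabs y < / 4 ->
  (1 - 4 * y) * PSeries (PS_derive central_binom) y = 2 * PSeries central_binom y.
Proof.
  intros Hy. rewrite (PSeries_ode central_binom (fun _ => 0)), PSeries_const_0.
  - ring.
  - apply lt_CV_radius_central_binom, Hy.
  - apply lt_CV_radius_of_bound; auto. intros n. rewrite Rabs_R0.
    apply Rmult_le_pos; [apply pos_INR | apply pow_le; lra].
  - intros n. rewrite central_binom_succ. ring.
Qed.

Lemma central_binom_oddH_ode y : Rabs y < / 4 ->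
  (1 - 4 * y) * PSeries (PS_derive central_binom_oddH) y
  = 2 * PSeries central_binom_oddH y + 2 * PSeries central_binom y.
Proof.
  intros Hy. rewrite (PSeries_ode central_binom_oddH (PS_scal 2 central_binom)), PSeries_scal.
  - reflexivity.
  - apply lt_CV_radius_central_binom_oddH, Hy.
  - rewrite CV_radius_scal by lra. apply lt_CV_radius_central_binom, Hy.
  - intros n. unfold central_binom_oddH, PS_scal. change scal with Rmult.
    rewrite oddH_succ, <- Rmult_assoc, central_binom_succ.
    assert (Hn := pos_INR n). field. lra.
Qed.

Lemma PSeries_central_binom y : Rabs y < / 4 ->
  PSeries central_binom y * sqrt (1 - 4 * y) = 1.
Proof.
  intros Hy.
  rewrite (ode_mul_sqrt_const (PSeries central_binom) (PSeries (PS_derive central_binom))),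
    PSeries_0, central_binom_0; auto.
  - intros z Hz. apply is_derive_PSeries, lt_CV_radius_central_binom, Hz.
  - apply central_binom_ode.
Qed.

(* [F + E ln (sqrt (1 - 4y))] solves the homogeneous equation solved by [E]. *)
Lemma PSeries_central_binom_oddH y : Rabs y < / 4 ->
  PSeries central_binom_oddH y * sqrt (1 - 4 * y) = - ln (sqrt (1 - 4 * y)).
Proof.
  intros Hy.
  set (E := PSeries central_binom). set (F := PSeries central_binom_oddH).
  set (L := fun z => ln (sqrt (1 - 4 * z))).
  set (E' := PSeries (PS_derive central_binom)).
  set (F' := PSeries (PS_derive central_binom_oddH)).
  assert (HW := ode_mul_sqrt_const (fun z => F z + E z * L z)
    (fun z => F' z + (E' z * L z + E z * (-2 / (1 - 4 * z))))).
  assert (HW0 : F 0 + E 0 * L 0 = 0).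
  { unfold E, F, L. rewrite !PSeries_0, central_binom_0.
    replace (1 - 4 * 0) with 1 by ring. rewrite sqrt_1, ln_1.
    unfold central_binom_oddH. simpl oddH. ring. }
  cbv beta in HW. rewrite HW0 in HW.
  assert (HEy := PSeries_central_binom y Hy). fold E in HEy.
  enough (Hsum : (F y + E y * L y) * sqrt (1 - 4 * y) = 0).
  { replace ((F y + E y * L y) * sqrt (1 - 4 * y))
      with (F y * sqrt (1 - 4 * y) + E y * sqrt (1 - 4 * y) * L y) in Hsum by ring.
    rewrite HEy in Hsum. unfold L in Hsum. lra. }
  apply HW; auto.
  - intros z Hz. assert (Hu := quarter_disk_pos z Hz).
    apply (is_derive_plus F (fun z => E z * L z)).
    + apply is_derive_PSeries, lt_CV_radius_central_binom_oddH, Hz.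
    + apply (is_derive_mult E L); [| |intros; apply Rmult_comm].
      * apply is_derive_PSeries, lt_CV_radius_central_binom, Hz.
      * apply is_derive_ln_sqrt_1_4y, Hu.
  - intros z Hz. assert (Hu := quarter_disk_pos z Hz).
    assert (HE := central_binom_ode z Hz). assert (HF := central_binom_oddH_ode z Hz).
    fold E E' in HE. fold E F F' in HF.
    replace ((1 - 4 * z) * (F' z + (E' z * L z + E z * (-2 / (1 - 4 * z)))))
      with ((1 - 4 * z) * F' z + (1 - 4 * z) * E' z * L z - 2 * E z) by (field; lra).
    rewrite HF, HE. ring.
Qed.

Lemma Rpower_INR_3_2 u j : 0 < u -> Rpower u (INR j + 3 / 2) = u ^ S j * sqrt u.
Proof.
  intros Hu. replace (INR j + 3 / 2) with (INR (S j) + / 2) by (rewrite S_INR; field).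
  rewrite Rpower_plus, Rpower_pow, Rpower_sqrt by exact Hu. reflexivity.
Qed.

Lemma is_derive_A_j j y : 0 < 1 - 4 * y ->
  is_derive (A_j j) y
    (-2 * (1 - 4 * y) ^ j * sqrt (1 - 4 * y) * (ln (sqrt (1 - 4 * y)) - 1)).
Proof.
  intros Hu. assert (Hs : 0 < sqrt (1 - 4 * y)) by (apply sqrt_lt_R0; auto).
  unfold A_j, Rpower. auto_derive; [repeat split; auto|].
  replace (1 + - (4 * y)) with (1 - 4 * y) by ring.
  change (exp ((INR j + 3 / 2) * ln (1 - 4 * y))) with (Rpower (1 - 4 * y) (INR j + 3 / 2)).
  rewrite Rpower_INR_3_2 by exact Hu.
  set (s := sqrt (1 - 4 * y)) in *.
  assert (Hss : s * s = 1 - 4 * y) by (apply sqrt_sqrt; lra).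
  rewrite <- Hss. assert (Hj := pos_INR j). simpl. field. lra.
Qed.

Lemma sum_lt_ext (f g : nat -> R) k :
  (forall j, (j < k)%nat -> f j = g j) -> sum_lt f k = sum_lt g k.
Proof.
  induction k as [|k IH]; intros H; simpl; [reflexivity|].
  rewrite IH, H; auto.
Qed.

Lemma sum_lt_eq0 (f : nat -> R) k : (forall j, (j < k)%nat -> f j = 0) -> sum_lt f k = 0.
Proof.
  intros H. rewrite (sum_lt_ext f (fun _ => 0)) by exact H.
  clear H. induction k; simpl; lra.
Qed.

Lemma sum_lt_scal c (f : nat -> R) k : sum_lt (fun j => c * f j) k = c * sum_lt f k.
Proof. induction k as [|k IH]; simpl; [|rewrite IH]; ring. Qed.

Lemma sum_lt_sum_f_R0 (f : nat -> R) k : sum_lt f (S k) = sum_f_R0 f k.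
Proof. induction k as [|k IH]; simpl in *; [ring | rewrite IH; reflexivity]. Qed.

Lemma sum_lt_binomial k u : sum_lt (fun j => binom k j * (- u) ^ j) (S k) = (1 - u) ^ k.
Proof.
  rewrite sum_lt_sum_f_R0. replace (1 - u) with (- u + 1) by ring.
  rewrite binomial. apply sum_eq. intros i _. rewrite pow1. unfold binom. ring.
Qed.

Lemma is_derive_sum_lt (F : nat -> R -> R) (F' : nat -> R) k y :
  (forall j, (j < k)%nat -> is_derive (F j) y (F' j)) ->
  is_derive (fun z => sum_lt (fun j => F j z) k) y (sum_lt F' k).
Proof.
  induction k as [|k IH]; intros H; simpl.
  - apply (is_derive_const (0 : R)).
  - apply (is_derive_plus (fun z => sum_lt (fun j => F j z) k) (F k)); auto.
Qed.

Definition A_sum (m : nat) (y : R) : R :=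
  sum_lt (fun j => (-1) ^ j * binom (m - 1) j * A_j j y) m.

Lemma A_sum_0 m : A_sum m 0 = 0.
Proof.
  apply sum_lt_eq0. intros j _. unfold A_j.
  replace (1 - 4 * 0) with 1 by ring.
  rewrite sqrt_1, ln_1. unfold Rpower. rewrite ln_1, Rmult_0_r, exp_0.
  assert (Hj := pos_INR j). field. lra.
Qed.

Lemma is_derive_A_sum k y : 0 < 1 - 4 * y ->
  is_derive (A_sum (S k)) y
    (-2 * sqrt (1 - 4 * y) * (ln (sqrt (1 - 4 * y)) - 1) * (4 * y) ^ k).
Proof.
  intros Hu.
  replace ((4 * y) ^ k) with (sum_lt (fun j => binom k j * (- (1 - 4 * y)) ^ j) (S k))
    by (rewrite sum_lt_binomial; f_equal; ring).
  rewrite <- sum_lt_scal. unfold A_sum.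
  replace (S k - 1)%nat with k by lia.
  apply (is_derive_sum_lt (fun j z => (-1) ^ j * binom k j * A_j j z)).
  intros j _.
  replace (-2 * sqrt (1 - 4 * y) * (ln (sqrt (1 - 4 * y)) - 1)
           * (binom k j * (- (1 - 4 * y)) ^ j))
    with ((-1) ^ j * binom k j
          * (-2 * (1 - 4 * y) ^ j * sqrt (1 - 4 * y) * (ln (sqrt (1 - 4 * y)) - 1)))
    by (replace (- (1 - 4 * y)) with (-1 * (1 - 4 * y)) by ring;
        rewrite Rpow_mult_distr; ring).
  apply is_derive_scal, is_derive_A_j, Hu.
Qed.

(* This cancels the [m y^(m-1)] part of the derivative of
   [y^m sqrt (1 - 4y) (ln (sqrt (1 - 4y)) - 1) / 2]. *)
Lemma is_derive_scaled_A_sum m y : 0 < 1 - 4 * y ->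
  is_derive (fun z => INR m / 4 ^ m * A_sum m z) y
    (- INR m * y ^ pred m * sqrt (1 - 4 * y) * (ln (sqrt (1 - 4 * y)) - 1) / 2).
Proof.
  intros Hu. destruct m as [|k].
  - replace (- INR 0 * y ^ pred 0 * sqrt (1 - 4 * y) * (ln (sqrt (1 - 4 * y)) - 1) / 2)
      with (INR 0 / 4 ^ 0 * 0) by (simpl; field).
    apply is_derive_scal, (is_derive_const (0 : R)).
  - replace (- INR (S k) * y ^ pred (S k) * sqrt (1 - 4 * y) * (ln (sqrt (1 - 4 * y)) - 1) / 2)
      with (INR (S k) / 4 ^ S k
            * (-2 * sqrt (1 - 4 * y) * (ln (sqrt (1 - 4 * y)) - 1) * (4 * y) ^ k)).
    + apply is_derive_scal, is_derive_A_sum, Hu.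
    + assert (H4 : 4 ^ k <> 0) by (apply pow_nonzero; lra).
      rewrite Rpow_mult_distr. simpl. field. exact H4.
Qed.

Definition closed_primitive (m : nat) (y : R) : R :=
  y ^ m * sqrt (1 - 4 * y) * (ln (sqrt (1 - 4 * y)) - 1) / 2 + 0 ^ m / 2
  + INR m / 4 ^ m * A_sum m y.

Lemma closed_primitive_0 m : closed_primitive m 0 = 0.
Proof.
  unfold closed_primitive. rewrite A_sum_0.
  replace (1 - 4 * 0) with 1 by ring. rewrite sqrt_1, ln_1.
  destruct m; simpl; field. apply pow_nonzero. lra.
Qed.

Lemma is_derive_closed_primitive m y : 0 < 1 - 4 * y ->
  is_derive (closed_primitive m) y
    (y ^ m * (- ln (sqrt (1 - 4 * y)) / sqrt (1 - 4 * y))).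
Proof.
  intros Hu. assert (Hs : 0 < sqrt (1 - 4 * y)) by (apply sqrt_lt_R0; auto).
  assert (Hmain : is_derive
    (fun z => z ^ m * sqrt (1 - 4 * z) * (ln (sqrt (1 - 4 * z)) - 1) / 2) y
    (INR m * y ^ pred m * sqrt (1 - 4 * y) * (ln (sqrt (1 - 4 * y)) - 1) / 2
     - y ^ m * ln (sqrt (1 - 4 * y)) / sqrt (1 - 4 * y))).
  { auto_derive; [repeat split; auto|].
    replace (1 + - (4 * y)) with (1 - 4 * y) by ring. field. lra. }
  replace (y ^ m * (- ln (sqrt (1 - 4 * y)) / sqrt (1 - 4 * y))) with
    (INR m * y ^ pred m * sqrt (1 - 4 * y) * (ln (sqrt (1 - 4 * y)) - 1) / 2
     - y ^ m * ln (sqrt (1 - 4 * y)) / sqrt (1 - 4 * y) + 0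
     + - INR m * y ^ pred m * sqrt (1 - 4 * y) * (ln (sqrt (1 - 4 * y)) - 1) / 2)
    by (field; lra).
  apply (is_derive_plus
    (fun z => z ^ m * sqrt (1 - 4 * z) * (ln (sqrt (1 - 4 * z)) - 1) / 2 + 0 ^ m / 2)).
  - apply (is_derive_plus _ (fun _ => 0 ^ m / 2)); [exact Hmain|].
    apply (is_derive_const (0 ^ m / 2 : R)).
  - apply is_derive_scaled_A_sum, Hu.
Qed.

Lemma CV_radius_incr_n (a : nat -> R) k : CV_radius (PS_incr_n a k) = CV_radius a.
Proof.
  induction k as [|k IH]; [reflexivity|].
  change (CV_radius (PS_incr_1 (PS_incr_n a k)) = CV_radius a).
  rewrite CV_radius_incr_1. exact IH.
Qed.

Definition integrated_coef (m n : nat) : R := central_binom_oddH n / (INR n + INR m + 1).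

Lemma integrated_coef_bound m n : Rabs (integrated_coef m n) <= INR (S n) * 4 ^ n.
Proof.
  eapply Rle_trans; [|apply central_binom_oddH_bound].
  unfold integrated_coef, Rdiv. rewrite Rabs_mult.
  assert (Hn := pos_INR n). assert (Hm := pos_INR m).
  rewrite (Rabs_pos_eq (/ _)) by (apply Rlt_le, Rinv_0_lt_compat; lra).
  assert (/ (INR n + INR m + 1) <= 1) by (rewrite <- Rinv_1; apply Rinv_le_contravar; lra).
  assert (Ha := Rabs_pos (central_binom_oddH n)). nra.
Qed.

Lemma PS_derive_integrated_coef m n :
  PS_derive (PS_incr_n (integrated_coef m) (S m)) n = PS_incr_n central_binom_oddH m n.
Proof.
  unfold PS_derive. rewrite !PS_incr_n_simplify.
  destruct (Compare_dec.le_lt_dec (S m) (S n)); destruct (Compare_dec.le_lt_dec m n); try lia.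
  - replace (S n - S m)%nat with (n - m)%nat by lia. unfold integrated_coef.
    rewrite S_INR, <- (Nat.sub_add m n) at 1 by lia. rewrite plus_INR.
    assert (H := pos_INR (n - m)). assert (Hm := pos_INR m). field. lra.
  - change (zero : R) with 0. ring.
Qed.

(* Both sides are primitives of [y^m PSeries central_binom_oddH y] vanishing at 0. *)
Lemma PSeries_integrated_coef m y : Rabs y < / 4 ->
  y ^ S m * PSeries (integrated_coef m) y = closed_primitive m y.
Proof.
  intros Hy. rewrite <- PSeries_incr_n.
  set (G := PSeries (PS_incr_n (integrated_coef m) (S m))).
  enough (Hdiff : G y - closed_primitive m y = G 0 - closed_primitive m 0).
  { assert (HG0 : G 0 = 0) by (unfold G; rewrite PSeries_0; reflexivity).
    rewrite HG0, closed_primitive_0 in Hdiff. lra. }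
  apply (is_derive_0_const (fun z => G z - closed_primitive m z) (/ 4)); auto.
  intros z Hz. assert (Hu := quarter_disk_pos z Hz).
  assert (Hs : 0 < sqrt (1 - 4 * z)) by (apply sqrt_lt_R0; auto).
  replace 0 with (z ^ m * (- ln (sqrt (1 - 4 * z)) / sqrt (1 - 4 * z))
                  - z ^ m * (- ln (sqrt (1 - 4 * z)) / sqrt (1 - 4 * z))) by ring.
  apply (is_derive_minus G (closed_primitive m)); [|apply is_derive_closed_primitive, Hu].
  replace (z ^ m * (- ln (sqrt (1 - 4 * z)) / sqrt (1 - 4 * z)))
    with (PSeries (PS_derive (PS_incr_n (integrated_coef m) (S m))) z).
  - apply is_derive_PSeries. rewrite CV_radius_incr_n.
    apply lt_CV_radius_of_bound; [apply integrated_coef_bound | exact Hz].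
  - rewrite (PSeries_ext _ _ _ (PS_derive_integrated_coef m)), PSeries_incr_n.
    rewrite <- (PSeries_central_binom_oddH z Hz). field. lra.
Qed.

Theorem theorem22 (m : nat) (x : R) (hx0 : 0 < Rabs x) (hx1 : Rabs x < / 4) :
  is_series
    (fun n : nat => binom (2 * n) n * (oddH n / (INR n + INR m + 1)) * x ^ n)
    (sqrt (1 - 4 * x) / (2 * x) * (ln (sqrt (1 - 4 * x)) - 1)
     + 0 ^ m / (2 * x ^ (m + 1))
     + INR m / (4 ^ m * x ^ (m + 1))
       * sum_lt (fun j => (-1) ^ j * binom (m - 1) j * A_j j x) m).
Proof.
  assert (Hx : x <> 0) by (intros E; rewrite E, Rabs_R0 in hx0; lra).
  apply (is_series_ext (fun n => integrated_coef m n * x ^ n)).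
  { intros n. unfold integrated_coef, central_binom_oddH, central_binom, Rdiv.
    rewrite (Rmult_assoc (binom _ _)). reflexivity. }
  match goal with |- is_series _ ?l => replace l with (PSeries (integrated_coef m) x) end.
  - apply is_pseries_R, PSeries_correct, CV_radius_inside, lt_CV_radius_of_bound;
      [apply integrated_coef_bound | exact hx1].
  - assert (Hxm : x ^ m <> 0) by (apply pow_nonzero; exact Hx).
    assert (H4 : 4 ^ m <> 0) by (apply pow_nonzero; lra).
    apply Rmult_eq_reg_l with (x ^ S m); [|apply pow_nonzero; exact Hx].
    rewrite PSeries_integrated_coef by exact hx1.
    unfold closed_primitive. fold (A_sum m x). rewrite Nat.add_1_r. simpl (x ^ S m).
    field. auto.
Qed.
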